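(* Consider the Markov chain on the state space $\{0,1,2,\dots\}$ with infinite transition probability matrix $\mathbf P=(P_{ij})$ given by: $P_{00}=5/6$, $P_{01}=1/6$; $P_{10}=5/6$, $P_{12}=1/6$; for every $i\ge 2$: $P_{i0}=2/3$, $P_{i,i-1}=1/6$, $P_{i,i+1}=1/6$; all other entries $0$. Then the steady state probability vector $\vec\pi=(\pi_0,\pi_1,\pi_2,\dots)$ (the probability vector with $\vec\pi=\vec\pi\mathbf P$) is given by $\pi_i=\beta^i-\beta^{i+1}$ for $i=0,1,2,\dots$, where $\beta=3-2\sqrt2$. *)

From Stdlib Require Import Reals.
From Coquelicot Require Import Coquelicot.
Open Scope R_scope.

Definition P (i j : nat) : R :=
  match i with
  | O => match j with O => 5/6 | S O => 1/6 | _ => 0 end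
  | S O => match j with O => 5/6 | S (S O) => 1/6 | _ => 0 end
  | S (S k as i') =>
      if Nat.eqb j 0 then 2/3
      else if Nat.eqb j i' then 1/6
      else if Nat.eqb j (S i) then 1/6
      else 0
  end.

Definition prob_vector (pi : nat -> R) : Prop :=
  (forall i, 0 <= pi i) /\ is_series pi 1.

Definition stationary (pi : nat -> R) : Prop :=
  forall j, is_series (fun i => pi i * P i j) (pi j).

Definition beta : R := 3 - 2 * sqrt 2.

(** Stationarity in a column [j >= 1] reads [pi_j = (pi_(j-1) + pi_(j+1)) / 6],
    a linear recurrence with characteristic roots [beta] and [1/beta = 3 + 2 sqrt 2].
    Along any solution [pi_(j+1) - beta pi_j] is multiplied by [1/beta > 1] at each
    step, so it can tend to [0] (as the terms of a convergent series must) only if it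
    vanishes: [pi] is geometric of ratio [beta], and total mass [1] forces
    [pi_0 = 1 - beta].  Conversely this vector satisfies column [0] because
    [2/3 + (1 - beta^2)/6 = 1 - beta], using [beta^2 = 6 beta - 1]. *)

From Stdlib Require Import Reals Lra Lia.
From Coquelicot Require Import Coquelicot.
Open Scope R_scope.

Lemma is_series_zero : is_series (fun _ : nat => 0) 0.
Proof.
  apply (filterlim_ext (fun _ => 0)); [|apply filterlim_const].
  intro n; rewrite sum_n_const; ring.
Qed.

Lemma is_series_indicator (n : nat) (c : R) :
  is_series (fun i => if Nat.eqb i n then c else 0) c.
Proof.
  revert c; induction n as [|n IH]; intro c;
    apply is_series_decr_1; unfold plus, opp; simpl.
  - replace (c + - c) with 0 by ring. exact is_series_zero.
  - replace (c + - 0) with c by ring. apply IH.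
Qed.

Lemma is_series_geom_scal (q c : R) :
  Rabs q < 1 -> is_series (fun n => q ^ n * c) (c / (1 - q)).
Proof.
  intro Hq. unfold Rdiv. rewrite Rmult_comm.
  exact (is_series_scal_r c _ _ (is_series_geom q Hq)).
Qed.

Lemma expanding_lim_0_eq_0 (s : R) (v : nat -> R) :
  1 <= Rabs s -> (forall n, v (S n) = s * v n) -> is_lim_seq v 0 ->
  forall n, v n = 0.
Proof.
  intros Hs Hv Hlim.
  assert (Hgrow : forall n, Rabs (v 0%nat) <= Rabs (v n)).
  { induction n as [|n IH]; [lra|].
    rewrite Hv, Rabs_mult. pose proof (Rabs_pos (v n)). nra. }
  assert (Hv0 : v 0%nat = 0).
  { pose proof (is_lim_seq_le _ _ _ _ Hgrow (is_lim_seq_const _)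
                  (is_lim_seq_abs _ _ Hlim)) as Hle.
    simpl in Hle. rewrite Rabs_R0 in Hle.
    apply Rabs_eq_0. pose proof (Rabs_pos (v 0%nat)). lra. }
  induction n as [|n IH]; [exact Hv0|]. rewrite Hv, IH. ring.
Qed.

Lemma recurrence_lim_0_geometric (r s : R) (u : nat -> R) :
  1 <= Rabs s ->
  (forall n, u (S (S n)) = (r + s) * u (S n) - r * s * u n) ->
  is_lim_seq u 0 ->
  forall n, u n = r ^ n * u 0%nat.
Proof.
  intros Hs Hu Hlim.
  set (d := fun n => u (S n) - r * u n).
  assert (Hd : forall n, d n = 0).
  { apply (expanding_lim_0_eq_0 s); [exact Hs| |].
    - intro n. unfold d. rewrite Hu. ring.
    - replace 0 with (0 - r * 0) by ring.
      apply is_lim_seq_minus'; [apply (is_lim_seq_incr_1 u 0), Hlim|].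
      exact (is_lim_seq_scal_l u r 0 Hlim). }
  induction n as [|n IH]; [simpl; ring|].
  pose proof (Hd n) as E. unfold d in E. simpl. rewrite Rmult_assoc, <- IH. lra.
Qed.

Lemma beta_sqr : beta * beta = 6 * beta - 1.
Proof.
  pose proof (sqrt_sqrt 2 ltac:(lra)). unfold beta. nra.
Qed.

Lemma beta_bounds : 0 < beta < 1.
Proof.
  pose proof (sqrt_sqrt 2 ltac:(lra)). pose proof (sqrt_pos 2).
  unfold beta. split; nra.
Qed.

Lemma P_col_succ (i m : nat) :
  P i (S m) = (if Nat.eqb i m then 1/6 else 0) + (if Nat.eqb i (S (S m)) then 1/6 else 0).
Proof.
  destruct i as [|[|i]]; [destruct m as [|[|m]]; simpl; lra ..|].
  cbn [P].
  repeat match goal with |- context [Nat.eqb ?a ?b] => destruct (Nat.eqb_spec a b) end;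
    lia || lra.
Qed.

Lemma is_series_col_succ (pi : nat -> R) (m : nat) :
  is_series (fun i => pi i * P i (S m)) (pi m / 6 + pi (S (S m)) / 6).
Proof.
  eapply is_series_ext; [|exact (is_series_plus _ _ _ _
     (is_series_indicator m (pi m / 6)) (is_series_indicator (S (S m)) (pi (S (S m)) / 6)))].
  intro i. unfold plus; simpl. rewrite P_col_succ.
  repeat match goal with |- context [Nat.eqb ?a ?b] => destruct (Nat.eqb_spec a b) end;
    try lia; subst; lra.
Qed.

Lemma is_series_col_0 (pi : nat -> R) (l : R) : is_series pi l ->
  is_series (fun i => pi i * P i 0) (2/3 * l + pi 0%nat / 6 + pi 1%nat / 6).
Proof.
  intro Hl.
  pose proof (is_series_plus _ _ _ _
    (is_series_plus _ _ _ _ (is_series_scal_l (2/3) _ _ Hl) (is_series_indicator 0 (pi 0%nat / 6)))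
    (is_series_indicator 1 (pi 1%nat / 6))) as H.
  eapply is_series_ext; [|exact H].
  intro i. unfold plus, scal; simpl. unfold mult; simpl.
  destruct i as [|[|i]]; simpl; lra.
Qed.

Lemma stationary_recurrence (pi : nat -> R) :
  stationary pi -> forall m, pi (S (S m)) = 6 * pi (S m) - pi m.
Proof.
  intros Hst m.
  pose proof (is_series_unique _ _ (Hst (S m))) as E1.
  pose proof (is_series_unique _ _ (is_series_col_succ pi m)) as E2.
  lra.
Qed.

Lemma stationary_of_balance (pi : nat -> R) (l : R) :
  is_series pi l ->
  pi 0%nat = 2/3 * l + pi 0%nat / 6 + pi 1%nat / 6 ->
  (forall m, pi (S (S m)) = 6 * pi (S m) - pi m) ->
  stationary pi.
Proof.
  intros Hl H0 Hrec [|m].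
  - rewrite H0. exact (is_series_col_0 pi l Hl).
  - replace (pi (S m)) with (pi m / 6 + pi (S (S m)) / 6) by (rewrite Hrec; lra).
    apply is_series_col_succ.
Qed.

Lemma stationary_series_1_eq (pi : nat -> R) :
  is_series pi 1 -> stationary pi -> forall i, pi i = beta ^ i - beta ^ S i.
Proof.
  intros Hsum Hst.
  destruct beta_bounds as [Hb0 Hb1].
  assert (Hgeom : forall n, pi n = beta ^ n * pi 0%nat).
  { apply (recurrence_lim_0_geometric beta (6 - beta)).
    - rewrite Rabs_pos_eq; lra.
    - intro n. rewrite stationary_recurrence by exact Hst.
      replace (beta * (6 - beta)) with 1 by (pose proof beta_sqr; lra). ring.
    - apply ex_series_lim_0. exists 1. exact Hsum. }
  assert (Hpi0 : pi 0%nat = 1 - beta).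
  { assert (Hsum' : is_series pi (pi 0%nat / (1 - beta))).
    { eapply is_series_ext; [intro n; symmetry; apply Hgeom|].
      apply is_series_geom_scal. rewrite Rabs_pos_eq; lra. }
    pose proof (is_series_unique _ _ Hsum') as U.
    rewrite (is_series_unique _ _ Hsum) in U.
    replace (pi 0%nat) with (pi 0%nat / (1 - beta) * (1 - beta)) by (field; lra).
    rewrite <- U. ring. }
  intro i. rewrite Hgeom, Hpi0. simpl. ring.
Qed.

Lemma eq_prob_vector_stationary (pi : nat -> R) :
  (forall i, pi i = beta ^ i - beta ^ S i) -> prob_vector pi /\ stationary pi.
Proof.
  intro Hpi.
  destruct beta_bounds as [Hb0 Hb1]. pose proof beta_sqr as Hb.
  assert (Hgeom : forall i, pi i = beta ^ i * (1 - beta)) by (intro i; rewrite Hpi; simpl; ring).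
  assert (Hsum : is_series pi 1).
  { replace 1 with ((1 - beta) / (1 - beta)) by (field; lra).
    eapply is_series_ext; [intro n; symmetry; apply Hgeom|].
    apply is_series_geom_scal. rewrite Rabs_pos_eq; lra. }
  split; [split; [|exact Hsum]|].
  - intro i. rewrite Hgeom. apply Rmult_le_pos; [apply pow_le|]; lra.
  - apply (stationary_of_balance pi 1 Hsum).
    + rewrite !Hgeom. simpl. nra.
    + intro m. rewrite !Hgeom. simpl.
      replace (beta * (beta * beta ^ m)) with (beta * beta * beta ^ m) by ring.
      rewrite Hb. ring.
Qed.

Theorem theorem4p1 :
  forall pi : nat -> R,
    (prob_vector pi /\ stationary pi) <->
    (forall i : nat, pi i = beta ^ i - beta ^ (S i)).
Proof.
  intro pi. split.
  - intros [[_ Hsum] Hst]. exact (stationary_series_1_eq pi Hsum Hst).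
  - apply eq_prob_vector_stationary.
Qed.
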